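(* Let $I$ be an interpretation and let $\delta,\delta'$ be objects of $D_A\sqcup SD_A$ (a type or a finite list of types). If there is a morphism $f:\delta\to\delta'$ (in $D_A$ or in $SD_A$), then $\llbracket\delta\rrbracket_I\subseteq\llbracket\delta'\rrbracket_I$.
   Context: $[n]=\{1,\dots,n\}$. Fix a class $\mathcal C$ of functions between finite ordinals equal to one of: all bijections, all injections, all surjections, all functions. For a small category $X$, $SX$ has finite lists of objects of $X$ as objects and morphisms $\langle x_1,\dots,x_n\rangle\to\langle y_1,\dots,y_m\rangle$ the tuples $\langle\alpha,f_1,\dots,f_m\rangle$ with $\alpha:[m]\to[n]$ in $\mathcal C$ and $f_i:x_{\alpha(i)}\to y_i$; composite of $\langle\alpha,\vec f\rangle$ then $\langle\beta,\vec g\rangle$ is $\langle\alpha\circ\beta,(g_i\circ f_{\beta(i)})_i\rangle$. Fix a small category $A$. $D_A$ is the colimit of $D_0=A$, $D_{k+1}=(SD_k)^{o}\times D_k\sqcup A$ along canonical inclusions: objects (types) $a::=o\mid\langle a_1,\dots,a_k\rangle\Rightarrow a$ ($o\in\mathrm{Ob}(A)$); morphisms are those of $A$ and $\langle\alpha,\vec f\rangle\Rightarrow f:(\vec a\Rightarrow a)\to(\vec a'\Rightarrow a')$ for $\langle\alpha,\vec f\rangle:\vec a'\to\vec a$ in $SD_A$ and $f:a\to a'$; no others. $SD_A=S(D_A)$. $\Lambda$ is the set of $\lambda$-terms. $\mathcal X\subseteq\Lambda$ is saturated if $M[N/x]N_1\cdots N_n\in\mathcal X$ implies $(\lambda x.M)N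 N_1\cdots N_n\in\mathcal X$. For $\mathcal X_1,\mathcal X_2\subseteq\Lambda$, $\mathcal X_1\Rightarrow\mathcal X_2=\{M\mid\forall N\in\mathcal X_1,\ MN\in\mathcal X_2\}$. An interpretation is a functor $I$ from $A$ to the poset of saturated subsets of $\Lambda$ ordered by inclusion. Realizers: $\llbracket o\rrbracket_I=I(o)$, $\llbracket\langle\rangle\rangle\rrbracket_I$ is replaced by $\llbracket\langle\rangle\rrbracket_I=\Lambda$, $\llbracket\langle a_1,\dots,a_k\rangle\rrbracket_I=\bigcap_{i=1}^k\llbracket a_i\rrbracket_I$ for $k\ge1$, $\llbracket\vec a\Rightarrow a\rrbracket_I=\llbracket\vec a\rrbracket_I\Rightarrow\llbracket a\rrbracket_I$. *)

From mathcomp Require Import all_boot.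
Set Implicit Arguments.
Unset Strict Implicit.
Unset Printing Implicit Defensive.

Record category := Category {
  Ob : Type;
  Hom : Ob -> Ob -> Type;
  cid : forall x, Hom x x;
  ccomp : forall x y z, Hom x y -> Hom y z -> Hom x z;   (* diagrammatic order *)
  ccomp_id_l : forall x y (f : Hom x y), ccomp (cid x) f = f;
  ccomp_id_r : forall x y (f : Hom x y), ccomp f (cid y) = f;
  ccomp_assoc : forall x y z w (f : Hom x y) (g : Hom y z) (h : Hom z w),
      ccomp (ccomp f g) h = ccomp f (ccomp g h)
}.

Inductive fclass := Cbij | Cinj | Csurj | Call.

Definition inC (C : fclass) (m n : nat) (alpha : 'I_m -> 'I_n) : Prop :=
  match C with
  | Cbij => bijective alpha
  | Cinj => injective alpha
  | Csurj => forall j : 'I_n, exists i : 'I_m, alpha i = j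
  | Call => True
  end.

Section DA.
Variable A : category.

Inductive ty : Type :=
| base : Ob A -> ty
| arr : seq ty -> ty -> ty.  (* <a_1,...,a_k> => a *)

Definition lnth (l : seq ty) (i : 'I_(size l)) : ty := tnth (in_tuple l) i.

Variable C : fclass.

(* Dhom a a' : morphisms a -> a' in D_A;
   SDhom l l' : morphisms l -> l' in SD_A, i.e. tuples <alpha, f_1..f_m>
   with alpha : [m] -> [n] in C (m = size l', n = size l) and
   f_i : l_(alpha i) -> l'_i. *)
Inductive Dhom : ty -> ty -> Type :=
| DHbase : forall o o' : Ob A, Hom o o' -> Dhom (base o) (base o')
| DHarr : forall (l : seq ty) (a : ty) (l' : seq ty) (a' : ty),
    SDhom l' l -> Dhom a a' -> Dhom (arr l a) (arr l' a')
with SDhom : seq ty -> seq ty -> Type :=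
| SDH : forall (l l' : seq ty) (alpha : 'I_(size l') -> 'I_(size l)),
    inC C alpha ->
    (forall i : 'I_(size l'), Dhom (lnth (alpha i)) (lnth i)) ->
    SDhom l l'.

End DA.

Inductive term : Type :=
| var : nat -> term
| app : term -> term -> term
| lam : term -> term.

Fixpoint lift (k : nat) (t : term) : term :=
  match t with
  | var n => var (if n < k then n else n.+1)
  | app u v => app (lift k u) (lift k v)
  | lam u => lam (lift k.+1 u)
  end.

(* subst k N t : substitute N for the variable of index k in t
   (free variables above k are decremented). *)
Fixpoint subst (k : nat) (N : term) (t : term) : term :=
  match t with
  | var n => if n < k then var n else if n == k then N else var n.-1
  | app u v => app (subst k N u) (subst k N v)
  | lam u => lam (subst k.+1 (lift 0 N) u)
  end.

Definition apps (M : term) (Ns : seq term) : term := foldl app M Ns.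

Definition tset := term -> Prop.
Definition Lambda : tset := fun _ => True.
Definition tsubset (X Y : tset) : Prop := forall M, X M -> Y M.

Definition saturated (X : tset) : Prop :=
  forall (M N : term) (Ns : seq term),
    X (apps (subst 0 N M) Ns) -> X (apps (app (lam M) N) Ns).

Definition arrow (X1 X2 : tset) : tset :=
  fun M => forall N, X1 N -> X2 (app M N).

(* An interpretation: a functor from A into the poset of saturated sets. *)
Definition interpretation (A : category) (I : Ob A -> tset) : Prop :=
  (forall o, saturated (I o)) /\
  (forall (o o' : Ob A) (f : Hom o o'), tsubset (I o) (I o')).

Fixpoint bigcap (Xs : seq tset) : tset :=
  match Xs with
  | [::] => Lambda
  | X :: Xs' => fun M => X M /\ bigcap Xs' M
  end.

Fixpoint real (A : category) (I : Ob A -> tset) (a : ty A) : tset :=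
  match a with
  | base o => I o
  | arr l b => arrow (bigcap (map (real I) l)) (real I b)
  end.

Definition realL (A : category) (I : Ob A -> tset) (l : seq (ty A)) : tset :=
  bigcap (map (real I) l).

From mathcomp Require Import all_boot.

(* By mutual induction on morphisms: an arrow type is
   contravariant in its argument list, and the realizer of a list is the
   intersection of its components, so reindexing along [alpha] followed by
   componentwise morphisms can only shrink the list of constraints. *)

Scheme Dhom_ind_dep := Induction for Dhom Sort Prop
  with SDhom_ind_dep := Induction for SDhom Sort Prop.
Combined Scheme Dhom_SDhom_ind from Dhom_ind_dep, SDhom_ind_dep.

Lemma bigcap_map_nthP (T : Type) (f : T -> tset) (s : seq T) (x0 : T) M :
  bigcap (map f s) M <-> (forall n, n < size s -> f (nth x0 s n) M).
Proof.
elim: s => [|x s IHs] /=; first by split.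
split=> [[fxM /IHs fsM] [|n] //= ltns | fsM]; first exact: fsM.
by split; [apply: (fsM 0) | apply/IHs => n; apply: (fsM n.+1)].
Qed.

Lemma realLP (A : category) (I : Ob A -> tset) (l : seq (ty A)) M :
  realL I l M <-> (forall i : 'I_(size l), real I (lnth i) M).
Proof.
case: l => [|a0 l]; first by split=> // _ [].
have lnthE (i : 'I_(size (a0 :: l))) : lnth i = nth a0 (a0 :: l) i.
  by rewrite /lnth (tnth_nth a0).
split=> [/(bigcap_map_nthP _ _ _ a0) realM i | realM].
  by rewrite lnthE; apply: realM.
by apply/(bigcap_map_nthP _ _ _ a0) => n ltn; have := realM (Ordinal ltn); rewrite lnthE.
Qed.

Lemma tsubset_arrow (X1 X2 Y1 Y2 : tset) :
  tsubset Y1 X1 -> tsubset X2 Y2 -> tsubset (arrow X1 X2) (arrow Y1 Y2).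
Proof. by move=> subY1 subX2 M XM N /subY1/XM/subX2. Qed.

Lemma tsubset_realL_reindex (A : category) (I : Ob A -> tset) (l l' : seq (ty A))
    (alpha : 'I_(size l') -> 'I_(size l)) :
  (forall i, tsubset (real I (lnth (alpha i))) (real I (lnth i))) ->
  tsubset (realL I l) (realL I l').
Proof. by move=> sub_i M /realLP realM; apply/realLP => i; apply/sub_i/realM. Qed.

Lemma tsubset_real_hom (A : category) (C : fclass) (I : Ob A -> tset) :
  (forall (o o' : Ob A), Hom o o' -> tsubset (I o) (I o')) ->
  (forall (a a' : ty A), Dhom C a a' -> tsubset (real I a) (real I a')) /\
  (forall (l l' : seq (ty A)), SDhom C l l' -> tsubset (realL I l) (realL I l')).
Proof.
move=> I_mono.
apply: (Dhom_SDhom_ind A C (fun a a' _ => tsubset (real I a) (real I a'))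
                             (fun l l' _ => tsubset (realL I l) (realL I l'))).
- by move=> o o' f; apply: I_mono.
- by move=> l a l' a' _ subl _ suba; apply: tsubset_arrow.
- by move=> l l' alpha _ _ sub_i; apply: tsubset_realL_reindex sub_i.
Qed.

Theorem lemma4 (A : category) (C : fclass) (I : Ob A -> tset) :
  interpretation I ->
  (forall (a a' : ty A), Dhom C a a' -> tsubset (real I a) (real I a')) /\
  (forall (l l' : seq (ty A)), SDhom C l l' -> tsubset (realL I l) (realL I l')).
Proof. by move=> [_ I_mono]; apply: tsubset_real_hom. Qed.
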